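(* Let $\mathbf{\hat X}=(\hat x_{f,h})\in[0,1]^{F\times H}$. Let $\alpha$ be a set of edges of the complete bipartite graph between $\{1,\dots,F\}$ and $\{1,\dots,H\}$ forming a simple cycle or a simple path, with $\alpha=M_1\cup M_2$ a decomposition into two disjoint matchings (alternate edges). Let $\epsilon_1=\min\{\min_{(f,h)\in M_1}\hat x_{f,h},\ \min_{(f,h)\in M_2}(1-\hat x_{f,h})\}$, $\epsilon_2=\min\{\min_{(f,h)\in M_2}\hat x_{f,h},\ \min_{(f,h)\in M_1}(1-\hat x_{f,h})\}$, and for $\epsilon\in[-\epsilon_1,\epsilon_2]$ define $\mathbf{X}(\epsilon,\alpha)$ by $x_{f,h}(\epsilon,\alpha)=\hat x_{f,h}+\epsilon$ for $(f,h)\in M_1$, $x_{f,h}(\epsilon,\alpha)=\hat x_{f,h}-\epsilon$ for $(f,h)\in M_2$, and $x_{f,h}(\epsilon,\alpha)=\hat x_{f,h}$ otherwise. Then the function $\epsilon\mapsto g(\mathbf{X}(\epsilon,\alpha))$ is convex on $[-\epsilon_1,\epsilon_2]$, where $$g(\mathbf{X})=\sum_{f=1}^F\sum_{u=1}^U P_f\,\widetilde{\omega}_u\Big[1-\prod_{h\in\mathcal{H}(u),\,h\neq0}(1-x_{f,h})\Big].$$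
   Context: Setting: helpers $\{0,1,\dots,H\}$ (helper $0$ is the base station), users $\{1,\dots,U\}$, files $\{1,\dots,F\}$ with probabilities $P_f\ge0$; $\mathcal{H}(u)$ is the set of helpers connected to user $u$ (always containing $0$); $\widetilde{\omega}_u\ge 0$ are given weights (in the paper $\widetilde{\omega}_u=\omega_{0,u}-\omega_1$, where all helper-user links have per-bit delay $\omega_1$ and the base station link to $u$ has delay $\omega_{0,u}>\omega_1$). A matching is a set of edges no two of which share a vertex. The pairs $(\mathbf{\hat X},\alpha)$ considered are exactly those arising as intermediate values in the pipage rounding procedure (where $\alpha$ is a simple cycle or a simple path between degree-one nodes in the subgraph of edges with fractional $\hat x_{f,h}$). *)

From HB Require Import structures.
From mathcomp Require Import all_boot all_order all_algebra.
Set Implicit Arguments. Unset Strict Implicit. Unset Printing Implicit Defensive.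
Import Order.TTheory GRing.Theory Num.Theory.

(* Files are 'I_F (file f+1), non-base helpers {1..H} are 'I_H (helper h+1).
   Edges of the complete bipartite graph files x helpers: 'I_F * 'I_H. *)
Definition edge (F H : nat) := ('I_F * 'I_H)%type.
Definition vert (F H : nat) := ('I_F + 'I_H)%type.

Definition edge_of (F H : nat) (a b : vert F H) : option (edge F H) :=
  match a, b with
  | inl f, inr h => Some (f, h)
  | inr h, inl f => Some (f, h)
  | _, _ => None
  end.

Definition adjb (F H : nat) (a b : vert F H) : bool := edge_of a b != None.

Definition seq_edges (F H : nat) (s : seq (vert F H)) : seq (edge F H) :=
  pmap (fun p => edge_of p.1 p.2) (zip s (behead s)).

Definition simple_path (F H : nat) (s : seq (vert F H)) : bool :=
  [&& uniq s, (2 <= size s)%N & sorted (@adjb F H) s].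

Definition simple_cycle (F H : nat) (s : seq (vert F H)) : bool :=
  [&& uniq s, (3 <= size s)%N & cycle (@adjb F H) s].

Definition cycle_edges (F H : nat) (s : seq (vert F H)) : seq (edge F H) :=
  match s with
  | [::] => [::]
  | x :: _ => seq_edges (rcons s x)
  end.

Definition path_or_cycle (F H : nat) (alpha : {set edge F H}) : Prop :=
  exists s : seq (vert F H),
    (simple_path s /\ alpha = [set e | e \in seq_edges s]) \/
    (simple_cycle s /\ alpha = [set e | e \in cycle_edges s]).

Definition matching (F H : nat) (M : {set edge F H}) : Prop :=
  forall e1 e2, e1 \in M -> e2 \in M -> e1 != e2 ->
    (e1.1 != e2.1) && (e1.2 != e2.2).

Section G.
Local Open Scope ring_scope.
Variable R : realFieldType.

(* g(X) = sum_f sum_u P_f w_u [1 - prod_{h in H(u), h<>0} (1 - x_{f,h})],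
   where Hu u is the set of non-base helpers connected to u *)
Definition gobj (F H U : nat) (P : 'I_F -> R) (w : 'I_U -> R)
    (Hu : 'I_U -> {set 'I_H}) (x : 'I_F -> 'I_H -> R) : R :=
  \sum_(f < F) \sum_(u < U) P f * w u * (1 - \prod_(h in Hu u) (1 - x f h)).

(* epsilon_1 and epsilon_2; the value 1 is the neutral element used for the
   empty min (harmless: alpha is nonempty and all terms are <= 1) *)
Definition eps1 (F H : nat) (xh : 'I_F -> 'I_H -> R) (M1 M2 : {set edge F H}) : R :=
  Num.min (\big[Num.min/1]_(e in M1) xh e.1 e.2)
          (\big[Num.min/1]_(e in M2) (1 - xh e.1 e.2)).
Definition eps2 (F H : nat) (xh : 'I_F -> 'I_H -> R) (M1 M2 : {set edge F H}) : R :=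
  Num.min (\big[Num.min/1]_(e in M2) xh e.1 e.2)
          (\big[Num.min/1]_(e in M1) (1 - xh e.1 e.2)).

Definition Xeps (F H : nat) (xh : 'I_F -> 'I_H -> R) (M1 M2 : {set edge F H})
    (eps : R) : 'I_F -> 'I_H -> R :=
  fun f h => if (f, h) \in M1 then xh f h + eps
             else if (f, h) \in M2 then xh f h - eps else xh f h.

Definition convex_on (a b : R) (phi : R -> R) : Prop :=
  forall x y t, a <= x <= b -> a <= y <= b -> 0 <= t <= 1 ->
    phi (t * x + (1 - t) * y) <= t * phi x + (1 - t) * phi y.
End G.

(* For a fixed file f, each matching contains at most one edge at f, so in
   prod_(h in H(u)) (1 - x_{f,h}(eps)) at most one factor decreases with eps,
   at most one increases, and the others are constants in [0, 1].  The product
   is therefore a quadratic in eps whose leading coefficient is minus a product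
   of such constants, or 0; so every term of g, and g itself, is a convex
   quadratic in eps on all of R. *)
From HB Require Import structures.
From mathcomp Require Import all_boot all_order all_algebra.
From mathcomp Require Import ring.
Import Order.TTheory GRing.Theory Num.Theory.
Local Open Scope ring_scope.

Definition convex_quadratic {R : realFieldType} (phi : R -> R) : Prop :=
  exists c0 c1 c2 : R, 0 <= c2 /\ forall e, phi e = c0 + c1 * e + c2 * (e * e).

Section ConvexQuadratic.
Variable R : realFieldType.
Implicit Types (phi : R -> R) (k : R).

Lemma eq_convex_quadratic phi psi :
  phi =1 psi -> convex_quadratic psi -> convex_quadratic phi.
Proof.
move=> eq_phi [c0 [c1 [c2 [c2_ge0 psiE]]]].
by exists c0, c1, c2; split=> // e; rewrite eq_phi psiE.
Qed.

Lemma convex_quadratic_sum (I : Type) (r : seq I) (phi : I -> R -> R) :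
  (forall i, convex_quadratic (phi i)) ->
  convex_quadratic (fun e => \sum_(i <- r) phi i e).
Proof.
move=> phiQ; elim: r => [|i r [c0 [c1 [c2 [c2_ge0 IH]]]]].
  by exists 0, 0, 0; split=> // e; rewrite big_nil; ring.
have [d0 [d1 [d2 [d2_ge0 phiE]]]] := phiQ i.
exists (d0 + c0), (d1 + c1), (d2 + c2); split; first exact: addr_ge0.
by move=> e; rewrite big_cons phiE IH; ring.
Qed.

Lemma convex_quadratic_scale k phi :
  0 <= k -> convex_quadratic phi -> convex_quadratic (fun e => k * phi e).
Proof.
move=> k_ge0 [c0 [c1 [c2 [c2_ge0 phiE]]]].
exists (k * c0), (k * c1), (k * c2); split; first exact: mulr_ge0.
by move=> e; rewrite phiE; ring.
Qed.

Lemma convex_quadratic_convex_on (a b : R) phi :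
  convex_quadratic phi -> convex_on a b phi.
Proof.
move=> [c0 [c1 [c2 [c2_ge0 phiE]]]] x y t _ _ /andP[t_ge0 t_le1].
rewrite !phiE -subr_ge0.
set z := t * x + (1 - t) * y.
have -> : t * (c0 + c1 * x + c2 * (x * x)) + (1 - t) * (c0 + c1 * y + c2 * (y * y))
          - (c0 + c1 * z + c2 * (z * z)) = c2 * (t * (1 - t)) * (x - y) ^+ 2.
  by rewrite /z; ring.
by rewrite mulr_ge0 ?sqr_ge0 // mulr_ge0 // mulr_ge0 // subr_ge0.
Qed.

End ConvexQuadratic.

Lemma prod_affine_at_most_one (R : realFieldType) (I : finType) (P : pred I)
    (a : I -> R) (s : R) :
  (forall h1 h2, P h1 -> P h2 -> h1 = h2) ->
  exists p q, (q = 0 \/ q = s) /\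
    forall e, \prod_(h | P h) (a h + s * e) = p + q * e.
Proof.
move=> P_uniq; case: (pickP P) => [h1 Ph1 | P0].
  exists (a h1), s; split=> [|e]; first by right.
  rewrite (bigD1 h1) //= big1 ?mulr1 // => h /andP[Ph neq_h].
  by rewrite (P_uniq _ _ Ph Ph1) eqxx in neq_h.
exists 1, 0; split=> [|e]; first by left.
by rewrite big_pred0 // mul0r addr0.
Qed.

Lemma one_sub_prod_shift_convex_quadratic (R : realFieldType) (I : finType)
    (S : {set I}) (A B : pred I) (a : I -> R) :
  (forall h, h \in S -> 0 <= a h) ->
  (forall h1 h2, h1 \in S -> h2 \in S -> A h1 -> A h2 -> h1 = h2) ->
  (forall h1 h2, h1 \in S -> h2 \in S -> B h1 -> B h2 -> h1 = h2) ->
  convex_quadratic (fun e =>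
    1 - \prod_(h in S) (if A h then a h - e else if B h then a h + e else a h)).
Proof.
move=> a_ge0 A_uniq B_uniq.
pose K := \prod_(h | (h \in S) && ~~ A h && ~~ B h) a h.
have K_ge0 : 0 <= K by apply: prodr_ge0 => h /andP[/andP[/a_ge0]].
have [p1 [q1 [q1E prodA]]] :
    exists p q, (q = 0 \/ q = -1) /\
      forall e, \prod_(h | (h \in S) && A h) (a h + -1 * e) = p + q * e.
  apply: prod_affine_at_most_one => h1 h2 /andP[S1 A1] /andP[S2 A2].
  exact: A_uniq.
have [p2 [q2 [q2E prodB]]] :
    exists p q, (q = 0 \/ q = 1) /\
      forall e, \prod_(h | (h \in S) && ~~ A h && B h) (a h + 1 * e) = p + q * e.
  apply: prod_affine_at_most_one => h1 h2 /andP[/andP[S1 _] B1] /andP[/andP[S2 _] B2].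
  exact: B_uniq.
have prodE e :
    \prod_(h in S) (if A h then a h - e else if B h then a h + e else a h) =
    (p1 + q1 * e) * ((p2 + q2 * e) * K).
  rewrite -prodA -prodB (bigID A) /=; congr (_ * _).
    by apply: eq_bigr => h /andP[_ ->]; ring.
  rewrite (bigID B) /=; congr (_ * _).
    by apply: eq_bigr => h /andP[/andP[_ /negbTE ->] ->]; ring.
  by apply: eq_bigr => h /andP[/andP[_ /negbTE ->] /negbTE ->].
exists (1 - p1 * p2 * K), (- (p1 * q2 + q1 * p2) * K), (- (q1 * q2 * K)).
split; last by move=> e; rewrite prodE; ring.
have q1q2_le0 : q1 * q2 <= 0.
  by case: q1E q2E => -> [] ->; rewrite ?mul0r ?mulr0 ?mulr1 ?lerN10.
by rewrite oppr_ge0 mulr_le0_ge0.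
Qed.

Lemma matching_same_file (F H : nat) (M : {set edge F H}) f h1 h2 :
  matching M -> (f, h1) \in M -> (f, h2) \in M -> h1 = h2.
Proof.
move=> M_match M1 M2; case: (eqVneq (f, h1) (f, h2)) => [[] //|neq].
by have := M_match _ _ M1 M2 neq; rewrite eqxx.
Qed.

Theorem mainTheorem5 (R : realFieldType) (F H U : nat)
    (P : 'I_F -> R) (w : 'I_U -> R) (Hu : 'I_U -> {set 'I_H})
    (xh : 'I_F -> 'I_H -> R) (alpha M1 M2 : {set edge F H}) :
  (forall f, 0 <= P f) ->
  (forall u, 0 <= w u) ->
  (forall f h, 0 <= xh f h <= 1) ->
  path_or_cycle alpha ->
  alpha = M1 :|: M2 ->
  [disjoint M1 & M2] ->
  matching M1 -> matching M2 ->
  convex_on (- eps1 xh M1 M2) (eps2 xh M1 M2)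
    (fun eps => gobj P w Hu (Xeps xh M1 M2 eps)).
Proof.
move=> P_ge0 w_ge0 xh01 _ _ _ M1_match M2_match.
apply: convex_quadratic_convex_on; rewrite /gobj.
apply: convex_quadratic_sum => f; apply: convex_quadratic_sum => u.
apply: convex_quadratic_scale; first exact: mulr_ge0.
have XepsE e : \prod_(h in Hu u) (1 - Xeps xh M1 M2 e f h) =
    \prod_(h in Hu u) (if (f, h) \in M1 then (1 - xh f h) - e
                       else if (f, h) \in M2 then (1 - xh f h) + e
                       else 1 - xh f h).
  by apply: eq_bigr => h _; rewrite /Xeps; case: ifP => _; [|case: ifP => _]; ring.
apply: eq_convex_quadratic => [e|]; first by rewrite XepsE.
apply: one_sub_prod_shift_convex_quadratic.
- by move=> h _; rewrite subr_ge0; case/andP: (xh01 f h).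
- by move=> h1 h2 _ _; apply: matching_same_file.
- by move=> h1 h2 _ _; apply: matching_same_file.
Qed.
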